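(* Let $\tau:\mathcal{X}\to\mathcal{X}$ be a continuous map on a sequentially compact topological space $\mathcal{X}$, let $\mathcal{F}\subseteq\mathcal{X}$ be nonempty, and let $S:\mathcal{X}\to\mathbb{R}$ be a multi-central Lyapunov function for $\tau$ around $\mathcal{F}$. Let $\mathcal{X}/\mathcal{F}$ be the quotient space obtained by collapsing $\mathcal{F}$ to a single point $[\mathcal{F}]$, with quotient map $\varphi:\mathcal{X}\to\mathcal{X}/\mathcal{F}$ and the quotient topology. Define $\tilde\tau:\mathcal{X}/\mathcal{F}\to\mathcal{X}/\mathcal{F}$ by $\tilde\tau([x])=\varphi(\tau(x))$ for $x\notin\mathcal{F}$ and $\tilde\tau([\mathcal{F}])=[\mathcal{F}]$. Then $\tilde\tau$ is mixing with fixed point $[\mathcal{F}]$, i.e. $\tilde\tau^n(y)\to[\mathcal{F}]$ for every $y\in\mathcal{X}/\mathcal{F}$.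
   Context: $\tau^n$ is the $n$-fold composition of $\tau$. A continuous map $S:\mathcal{X}\to\mathbb{R}$ is a multi-central Lyapunov function for $\tau$ around $\mathcal{F}\subseteq\mathcal{X}$ if for every $x\in\mathcal{X}$ the sequence $S(\tau^n(x))$ converges, $S$ is constant on $\mathcal{F}$, $\tau(\mathcal{F})\subseteq\mathcal{F}$, and $\lim_{n\to\infty}S(\tau^n(x))\neq S(x)$ for all $x\notin\mathcal{F}$. *)

From HB Require Import structures.
From mathcomp Require Import all_boot all_order all_algebra generic_quotient.
From mathcomp Require Import all_classical all_reals topology normedtype sequences.
Set Implicit Arguments. Unset Strict Implicit. Unset Printing Implicit Defensive.
Import Order.TTheory GRing.Theory Num.Theory numFieldNormedType.Exports.
Local Open Scope classical_set_scope.
Local Open Scope ring_scope.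
Local Open Scope quotient_scope.

Definition seq_compact (X : topologicalType) : Prop :=
  forall u : nat -> X, exists phi : nat -> nat,
    {homo phi : m n / (m < n)%N} /\ exists x : X, (u \o phi) @ \oo --> x.

Definition multi_central_lyapunov (R : realType) (X : topologicalType)
    (tau : X -> X) (F : set X) (S : X -> R) : Prop :=
  [/\ continuous S,
      (forall x, cvgn (fun n => S (iter n tau x))),
      (forall x y, F x -> F y -> S x = S y),
      tau @` F `<=` F &
      (forall x, ~ F x -> limn (fun n => S (iter n tau x)) <> S x)].

Section CollapseQuotient.
Variables (X : topologicalType) (F : set X).

Definition collapse_rel (x y : X) : bool :=
  (x == y) || (`[< F x >] && `[< F y >]).

Lemma collapse_rel_refl : reflexive collapse_rel.
Proof. by move=> x; rewrite /collapse_rel eqxx. Qed.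

Lemma collapse_rel_sym : symmetric collapse_rel.
Proof.
by move=> x y; rewrite /collapse_rel eq_sym andbC.
Qed.

Lemma collapse_rel_trans : transitive collapse_rel.
Proof.
move=> y x z; rewrite /collapse_rel.
case/orP=> [/eqP -> //|/andP [Fx Fy]].
case/orP=> [/eqP <-|/andP [_ Fz]]; first by rewrite Fx Fy orbT.
by rewrite Fx Fz orbT.
Qed.

Canonical collapse_equiv :=
  EquivRel collapse_rel collapse_rel_refl collapse_rel_sym collapse_rel_trans.

Definition collapse_quot := quotient_topology {eq_quot collapse_equiv}.

Definition collapse_map (x : X) : collapse_quot := \pi_collapse_quot x.

Definition collapse_tau (tau : X -> X) (q : collapse_quot) : collapse_quot :=
  if `[< F (repr q) >] then q else collapse_map (tau (repr q)).

End CollapseQuotient.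

Arguments collapse_quot {X} F.
Arguments collapse_map {X} F x.
Arguments collapse_tau {X} F tau q.

From HB Require Import structures.
From mathcomp Require Import all_boot all_order all_algebra generic_quotient.
From mathcomp Require Import all_classical all_reals topology normedtype sequences.
Import numFieldNormedType.Exports.
Local Open Scope classical_set_scope.
Local Open Scope ring_scope.

(* Every omega-limit point y of an orbit lies in F: along the subsequence
   converging to y, continuity gives S (tau^k y) = lim_n S (tau^n x) for every
   k, so the sequence S (tau^k y) is constant and its limit equals S y, which the
   Lyapunov property forbids outside F.  By sequential compactness an orbit that
   kept leaving a neighbourhood V of F would have an omega-limit point outside
   the open set V; hence the orbits of the collapsed map, which are the images of
   the orbits of tau, converge to the collapsed point [F]. *)

Lemma cvgn_comp_ge (T : topologicalType) (u : nat -> T) (m : nat -> nat) (l : T) :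
  (forall j, (j <= m j)%N) -> u @ \oo --> l -> (u \o m) @ \oo --> l.
Proof.
move=> m_ge u_l; apply: (cvg_comp m u _ u_l) => P [N _ PN].
by exists N => // j /leq_trans /(_ (m_ge j)); apply: PN.
Qed.

Lemma continuous_iter (T : topologicalType) (f : T -> T) (n : nat) :
  continuous f -> continuous (iter n f).
Proof.
move=> f_cont; elim: n => [|n IHn] x /=; first exact: cvg_id.
exact: continuous_comp (IHn x) (f_cont _).
Qed.

Section LyapunovOrbits.
Variables (R : realType) (X : topologicalType) (tau : X -> X) (F : set X).
Variable (S : X -> R).
Hypotheses (tau_cont : continuous tau) (S_lyap : multi_central_lyapunov tau F S).

Lemma lyapunov_omega_limit_in (x y : X) (m : nat -> nat) :
  (forall j, (j <= m j)%N) -> (fun j => iter (m j) tau x) @ \oo --> y -> F y.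
Proof.
move=> m_ge orbit_y; case: S_lyap => S_cont S_cvg _ _ S_strict.
set L := limn (fun n => S (iter n tau x)).
have S_iter_y k : S (iter k tau y) = L.
  have to_Sy : (fun j => S (iter k tau (iter (m j) tau x))) @ \oo -->
               S (iter k tau y).
    apply: continuous_cvg; first exact: S_cont.
    by apply: continuous_cvg => //; apply: continuous_iter.
  have to_L : (fun j => S (iter k tau (iter (m j) tau x))) @ \oo --> L.
    under eq_fun do rewrite -iterD.
    apply: (@cvgn_comp_ge _ (fun n => S (iter n tau x)) (fun j => k + m j)%N).
      by move=> j; rewrite (leq_trans (m_ge j)) ?leq_addl.
    exact: S_cvg.
  exact: cvg_unique to_Sy to_L.
apply: contrapT => /S_strict; apply.
have -> : (fun n => S (iter n tau y)) = fun=> L by apply: funext.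
by rewrite lim_cst // -(S_iter_y 0%N).
Qed.

Hypothesis X_seq_compact : seq_compact X.

Lemma iter_near_nbhs_set (x : X) (V : set X) :
  (forall z, F z -> nbhs z V) -> \forall n \near \oo, V (iter n tau x).
Proof.
move=> V_nbhs; apply: contrapT => not_near.
have avoid N : exists n, (N <= n)%N /\ ~ V (iter n tau x).
  apply: contrapT => never; apply: not_near; exists N => // n Nn.
  by apply: contrapT => notV; apply: never; exists n.
have [g g_spec] := choice avoid.
have [phi [phi_inc [y sub_y]]] := X_seq_compact (fun j => iter (g j) tau x).
have phi_ge j : (j <= phi j)%N.
  by elim: j => // j IHj; apply: leq_ltn_trans IHj (phi_inc _ _ (ltnSn j)).
have Fy : F y.
  apply: (@lyapunov_omega_limit_in x y (g \o phi)) sub_y => j.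
  exact: leq_trans (phi_ge j) (g_spec _).1.
have [N _ V_tail] := sub_y V (V_nbhs y Fy).
exact: (g_spec (phi N)).2 (V_tail N (leqnn N)).
Qed.

End LyapunovOrbits.

Arguments lyapunov_omega_limit_in {R X tau F S}.
Arguments iter_near_nbhs_set {R X tau F S}.

Section CollapseDynamics.
Variables (X : topologicalType) (F : set X) (tau : X -> X).

Lemma collapse_map_eqF (x y : X) :
  F x -> F y -> collapse_map F x = collapse_map F y.
Proof.
by move=> Fx Fy; apply/eqmodP; rewrite /= /collapse_rel; apply/orP; right;
  apply/andP; split; apply/asboolP.
Qed.

Hypothesis tauF : tau @` F `<=` F.

Lemma collapse_tau_map (x : X) :
  collapse_tau F tau (collapse_map F x) = collapse_map F (tau x).
Proof.
rewrite /collapse_tau.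
have : collapse_rel F (repr (collapse_map F x)) x by apply/eqmodP; rewrite reprK.
rewrite /collapse_rel; case: asboolP => [Frepr|_]; last by case/orP=> [/eqP ->|].
move=> rel_rx; have Fx : F x by case/orP: rel_rx => [/eqP <-|/andP [_ /asboolP]].
by apply: collapse_map_eqF => //; apply: tauF; exists x.
Qed.

Lemma iter_collapse_tau (n : nat) (x : X) :
  iter n (collapse_tau F tau) (collapse_map F x) = collapse_map F (iter n tau x).
Proof. by elim: n => //= n ->; rewrite collapse_tau_map. Qed.

End CollapseDynamics.

Arguments collapse_map_eqF {X F x y}.
Arguments collapse_tau_map {X F tau}.
Arguments iter_collapse_tau {X F tau}.

Theorem mainTheorem6 (R : realType) (X : topologicalType) (tau : X -> X)
    (F : set X) (S : X -> R) :
  seq_compact X -> continuous tau -> F !=set0 ->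
  multi_central_lyapunov tau F S ->
  forall x0 : X, F x0 ->
    collapse_tau F tau (collapse_map F x0) = collapse_map F x0 /\
    forall y : collapse_quot F,
      (fun n => iter n (collapse_tau F tau) y) @ \oo --> collapse_map F x0.
Proof.
move=> X_sc tau_cont _ S_lyap x0 Fx0.
have tauF : tau @` F `<=` F by case: S_lyap.
have F_tau_x0 : F (tau x0) by apply: tauF; exists x0.
split; first by rewrite collapse_tau_map // (collapse_map_eqF F_tau_x0 Fx0).
move=> y; have -> : y = collapse_map F (repr y) by rewrite /collapse_map reprK.
under eq_fun do rewrite iter_collapse_tau //.
move=> A A_nbhs.
have pre_nbhs z : F z -> nbhs z (collapse_map F @^-1` A).
  move=> Fz; apply: pi_continuous.
  by rewrite -/(collapse_map F z) (collapse_map_eqF Fz Fx0).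
exact: (iter_near_nbhs_set tau_cont S_lyap X_sc _ (collapse_map F @^-1` A)).
Qed.
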